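(* Assume: (i) for each $j\in N$ there exists $x^{s,*}_j$ with $f_j(x^{s,*}_j,0)=0$; (ii) there exists at least one bus $j\in N$ such that whenever $f_j(\bar x^s_j,-\bar\omega_j)=0$ for constants $\bar x^s_j\in\mathbb{R}^{n_j},\bar\omega_j\in\mathbb{R}$, then $\bar\omega_j=0$; (iii) there exists an equilibrium of $\dot x\in Q(x)$. Then every equilibrium $x^*=(\eta^*,\omega^*,x^{s,*})$ of $\dot x\in Q(x)$ satisfies $\omega^*=0\in\mathbb{R}^{|N|}$ and $Q(x^* )=\{0_n\}$ (in particular $d^c_j=f^c_j(\omega^*_j)=0$ for all $j$).
   Context: Network model. $(N,E)$ is a connected directed graph with $N=\{1,\dots,|N|\}$, $E\subseteq N\times N$, with arbitrary orientation: if $(i,j)\in E$ then $(j,i)\notin E$. For $j\in N$, ''$i:i\to j$'' ranges over $i$ with $(i,j)\in E$ and ''$k:j\to k$'' over $k$ with $(j,k)\in E$. Constants: $M_j>0$, $p^L_j\in\mathbb{R}$ ($j\in N$), $B_{ij}>0$ ($(i,j)\in E$). States: $\eta_{ij}\in\mathbb{R}$ for $(i,j)\in E$, $\omega_j\in\mathbb{R}$ and $x^s_j\in\mathbb{R}^{n_j}$ for $j\in N$; the full state is $x=(\eta,\omega,x^s)\in\mathbb{R}^n$, $n=|E|+|N|+\sum_j n_j$. The dynamics are $\dot\eta_{ij}=\omega_i-\omega_j$, $(i,j)\in E$; $M_j\dot\omega_j=-p^L_j+s_j-d^c_j-\sum_{k:j\to k}p_{jk}+\sum_{i:i\to j}p_{ij}$,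 $j\in N$; $p_{ij}=B_{ij}\sin\eta_{ij}$; $\dot x^s_j=f_j(x^s_j,-\omega_j)$, $s_j=g_j(x^s_j,-\omega_j)$, where $f_j:\mathbb{R}^{n_j}\times\mathbb{R}\to\mathbb{R}^{n_j}$ and $g_j:\mathbb{R}^{n_j}\times\mathbb{R}\to\mathbb{R}$ are globally Lipschitz. On-off loads. For each $j$, constants $-\infty<\underline d_j\le 0\le\overline d_j<\infty$ and $\underline\omega_j<0<\overline\omega_j$ are given, and $d^c_j=f^c_j(\omega_j)$ where $f^c_j(\omega)=\overline d_j$ if $\omega>\overline\omega_j$, $=0$ if $\underline\omega_j<\omega\le\overline\omega_j$, $=\underline d_j$ if $\omega\le\underline\omega_j$. Its Filippov set-valued map is $F[d^c_j](\omega)=[0,\overline d_j]$ if $\omega=\overline\omega_j$, $[\underline d_j,0]$ if $\omega=\underline\omega_j$, and $\{f^c_j(\omega)\}$ otherwise. The set-valued map $Q(x)$ has components: $\{\omega_i-\omega_j\}$ for each $(i,j)\in E$; $\{\frac1{M_j}(-p^L_j+s_j-v_j-\sum_{k:j\to k}p_{jk}+\sum_{i:i\to j}p_{ij}): v_j\in F[d^c_j](\omega_j)\}$ for each $j\in N$; $\{f_j(x^s_j,-\omega_j)\}$ for each $j\in N$. A point $x^*$ is an equilibrium of $\dot x\in Q(x)$ if $0_n\in Q(x^* )$. *)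

From mathcomp Require Import all_boot.
From Stdlib Require Import Reals.
Set Implicit Arguments. Unset Strict Implicit. Unset Printing Implicit Defensive.

(* Buses N = 'I_n (0-based relabelling of {1,..,|N|}), edge set E. *)
Definition Edge (n : nat) (E : {set 'I_n * 'I_n}) := {e : 'I_n * 'I_n | e \in E}.

Definition undir (n : nat) (E : {set 'I_n * 'I_n}) : rel 'I_n :=
  fun a b => ((a, b) \in E) || ((b, a) \in E).

Definition graph_connected (n : nat) (E : {set 'I_n * 'I_n}) : Prop :=
  forall i j : 'I_n, connect (undir E) i j.

Definition arbitrary_orientation (n : nat) (E : {set 'I_n * 'I_n}) : Prop :=
  forall i j : 'I_n, (i, j) \in E -> (j, i) \notin E.

Definition Rsum (I : finType) (P : pred I) (F : I -> R) : R :=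
  \big[Rplus/0%R]_(i | P i) F i.

Definition glob_lipschitz_vec (m p : nat)
  (f : ('I_m -> R) -> R -> ('I_p -> R)) : Prop :=
  exists L : R, (0 <= L)%R /\
    forall (x y : 'I_m -> R) (u v : R),
      (Rsum predT (fun k : 'I_p => Rabs (f x u k - f y v k))
        <= L * (Rsum predT (fun k : 'I_m => Rabs (x k - y k)) + Rabs (u - v)))%R.

Definition glob_lipschitz_scal (m : nat) (g : ('I_m -> R) -> R -> R) : Prop :=
  exists L : R, (0 <= L)%R /\
    forall (x y : 'I_m -> R) (u v : R),
      (Rabs (g x u - g y v)
        <= L * (Rsum predT (fun k : 'I_m => Rabs (x k - y k)) + Rabs (u - v)))%R.

(* On-off load f^c_j and its Filippov set-valued map F[d^c_j]. *)
Definition fc (dl du wl wu w : R) : R :=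
  if Rlt_dec wu w then du
  else if Rlt_dec wl w then 0%R
  else dl.

Definition Fdc (dl du wl wu w v : R) : Prop :=
  if Req_EM_T w wu then (0 <= v <= du)%R
  else if Req_EM_T w wl then (dl <= v <= 0)%R
  else v = fc dl du wl wu w.

Record state (n : nat) (E : {set 'I_n * 'I_n}) (nj : 'I_n -> nat) := mkState {
  st_eta : Edge E -> R;
  st_om  : 'I_n -> R;
  st_xs  : forall j : 'I_n, 'I_(nj j) -> R }.
Arguments st_xs {n E nj} s j _.
Arguments mkState {n E nj} _ _ _.

Definition is_zero_state n E nj (v : @state n E nj) : Prop :=
  (forall e, st_eta v e = 0%R) /\ (forall j, st_om v j = 0%R) /\
  (forall j k, st_xs v j k = 0%R).

Definition Qset (n : nat) (E : {set 'I_n * 'I_n}) (nj : 'I_n -> nat)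
  (M pL dl du wl wu : 'I_n -> R) (B : Edge E -> R)
  (f : forall j, ('I_(nj j) -> R) -> R -> ('I_(nj j) -> R))
  (g : forall j, ('I_(nj j) -> R) -> R -> R)
  (x v : state E nj) : Prop :=
  let p := fun e : Edge E => (B e * sin (st_eta x e))%R in
  (forall e : Edge E, st_eta v e = (st_om x (val e).1 - st_om x (val e).2)%R) /\
  (forall j : 'I_n, exists vj : R, Fdc (dl j) (du j) (wl j) (wu j) (st_om x j) vj /\
     st_om v j = (/ M j * (- pL j + g j (st_xs x j) (- st_om x j) - vj
                  - Rsum (fun e : Edge E => (val e).1 == j) p
                  + Rsum (fun e : Edge E => (val e).2 == j) p))%R) /\
  (forall j : 'I_n, st_xs v j = f j (st_xs x j) (- st_om x j)%R).

Definition equilibrium n E nj M pL dl du wl wu B f g (x : @state n E nj) : Prop :=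
  exists v, Qset M pL dl du wl wu B f g x v /\ is_zero_state v.

(* At an equilibrium every line flow derivative omega_i - omega_j vanishes, so
   connectivity makes the frequency uniform; the bus of assumption (ii) then
   forces this common frequency to be 0.  Since 0 lies strictly between the
   switching thresholds of every on-off load, the Filippov map is single-valued
   there, hence so is Q, and Q(x* ) is the singleton {0}. *)
From mathcomp Require Import all_boot.
From Stdlib Require Import Reals Lra FunctionalExtensionality.

Lemma fc_0 dl du wl wu : (wl < 0 < wu)%R -> fc dl du wl wu 0 = 0%R.
Proof.
move=> [wl_neg wu_pos]; rewrite /fc.
destruct (Rlt_dec wu 0); first lra.
by destruct (Rlt_dec wl 0); last lra.
Qed.

Lemma Fdc_single {dl du wl wu w v} :
  w <> wl -> w <> wu -> Fdc dl du wl wu w v -> v = fc dl du wl wu w.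
Proof.
move=> w_wl w_wu; rewrite /Fdc.
by destruct (Req_EM_T w wu); last destruct (Req_EM_T w wl).
Qed.

Lemma graph_connected_eq {T : Type} {n} {E : {set 'I_n * 'I_n}} (w : 'I_n -> T) :
  graph_connected E -> (forall i j, (i, j) \in E -> w i = w j) ->
  forall i j, w i = w j.
Proof.
move=> conn w_edge i j; have /connectP [p ij_path ->] := conn i j.
elim: p i ij_path => [|k p IHp] i //= /andP [/orP [ik | ki] kp].
  by rewrite (w_edge _ _ ik); exact: IHp.
by rewrite -(w_edge _ _ ki); exact: IHp.
Qed.

Lemma state_ext {n} {E : {set 'I_n * 'I_n}} {nj} (v v' : @state n E nj) :
  (forall e, st_eta v e = st_eta v' e) -> (forall j, st_om v j = st_om v' j) ->
  (forall j k, st_xs v j k = st_xs v' j k) -> v = v'.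
Proof.
case: v => eta om xs; case: v' => eta' om' xs' /= eq_eta eq_om eq_xs.
congr mkState; first exact: functional_extensionality.
- exact: functional_extensionality.
- apply: functional_extensionality_dep => j; exact: functional_extensionality.
Qed.

Lemma zero_state_eq {n} {E : {set 'I_n * 'I_n}} {nj} {v v' : @state n E nj} :
  is_zero_state v -> is_zero_state v' -> v = v'.
Proof.
move=> [v_eta [v_om v_xs]] [v'_eta [v'_om v'_xs]].
by apply: state_ext => *; rewrite v_eta v'_eta || rewrite v_om v'_om
                         || rewrite v_xs v'_xs.
Qed.

Section Equilibria.

Context {n : nat} {E : {set 'I_n * 'I_n}} {nj : 'I_n -> nat}.
Context {M pL dl du wl wu : 'I_n -> R} {B : Edge E -> R}.
Context {f : forall j, ('I_(nj j) -> R) -> R -> ('I_(nj j) -> R)}.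
Context {g : forall j, ('I_(nj j) -> R) -> R -> R}.

Let Q := Qset M pL dl du wl wu B f g.
Let equil := equilibrium M pL dl du wl wu B f g.

Lemma equilibrium_om_edge {x : state E nj} {i j} :
  equil x -> (i, j) \in E -> st_om x i = st_om x j.
Proof.
move=> [v [[Q_eta _] [v_eta _]]] ij.
by have := Q_eta (exist _ (i, j) ij); rewrite v_eta /=; lra.
Qed.

Lemma equilibrium_f_0 {x : state E nj} (j : 'I_n) (k : 'I_(nj j)) :
  equil x -> f j (st_xs x j) (- st_om x j)%R k = 0%R.
Proof. by move=> [v [[_ [_ Q_xs]] [_ [_ v_xs]]]]; rewrite -Q_xs v_xs. Qed.

Lemma Qset_functional {x : state E nj} {v v'} :
  (forall j, st_om x j <> wl j /\ st_om x j <> wu j) ->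
  Q x v -> Q x v' -> v = v'.
Proof.
move=> om_off [Q_eta [Q_om Q_xs]] [Q'_eta [Q'_om Q'_xs]].
apply: state_ext => [e | j | j k]; first by rewrite Q_eta Q'_eta.
- have [om_wl om_wu] := om_off j.
  have [u [/(Fdc_single om_wl om_wu) -> ->]] := Q_om j.
  by have [u' [/(Fdc_single om_wl om_wu) -> ->]] := Q'_om j.
- by rewrite Q_xs Q'_xs.
Qed.

End Equilibria.

Theorem lemma2 (n : nat) (E : {set 'I_n * 'I_n}) (nj : 'I_n -> nat)
  (M pL dl du wl wu : 'I_n -> R) (B : Edge E -> R)
  (f : forall j, ('I_(nj j) -> R) -> R -> ('I_(nj j) -> R))
  (g : forall j, ('I_(nj j) -> R) -> R -> R)
  (Hconn : graph_connected E)
  (Horient : arbitrary_orientation E)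
  (HM : forall j, (0 < M j)%R)
  (HB : forall e, (0 < B e)%R)
  (Hd : forall j, (dl j <= 0 <= du j)%R)
  (Hw : forall j, (wl j < 0 < wu j)%R)
  (Hf : forall j, glob_lipschitz_vec (f j))
  (Hg : forall j, glob_lipschitz_scal (g j))
  (H1 : forall j, exists xs : 'I_(nj j) -> R, forall k, f j xs 0%R k = 0%R)
  (H2 : exists j : 'I_n, forall (xs : 'I_(nj j) -> R) (w : R),
          (forall k, f j xs (- w)%R k = 0%R) -> w = 0%R)
  (H3 : exists x, equilibrium M pL dl du wl wu B f g x) :
  forall x : state E nj, equilibrium M pL dl du wl wu B f g x ->
    (forall j, st_om x j = 0%R) /\
    (forall v, Qset M pL dl du wl wu B f g x v <-> is_zero_state v) /\
    (forall j, fc (dl j) (du j) (wl j) (wu j) (st_om x j) = 0%R).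
Proof.
move=> x x_eq.
have om_const :=
  graph_connected_eq (st_om x) Hconn (fun i j => equilibrium_om_edge x_eq).
have om_0 : forall j, st_om x j = 0%R.
  have [j0 f_j0_0] := H2; move=> j; rewrite (om_const j j0).
  exact: f_j0_0 _ _ (fun k => equilibrium_f_0 j0 k x_eq).
have om_off : forall j, st_om x j <> wl j /\ st_om x j <> wu j.
  by move=> j; rewrite om_0; have := Hw j; lra.
have [v0 [Q_v0 v0_0]] := x_eq.
split=> //; split; last by move=> j; rewrite om_0; exact: fc_0.
move=> v; split=> [Q_v | v_0].
- by rewrite (Qset_functional om_off Q_v Q_v0).
- by rewrite (zero_state_eq v_0 v0_0).
Qed.
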